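(* Let $\Sigma$ be an alphabet and $(\mathcal{O},d)$ a pseudometric space. A bounded morphism $f : T \to T'$ in $\mathbf{TS}_{\Sigma}\mathcal{O}$ is $\mathbf{Lin}_{\Sigma}\mathcal{O}$-open if and only if the underlying morphism $Wf : WT \to WT'$ in $\mathbf{TS}_{\Sigma}$ is $\mathbf{Lin}_{\Sigma}$-open.
   Context: A (labelled) transition system over $\Sigma$ is a triple $(S,i,\Delta)$ with $S$ a set of states, $i\in S$ the initial state and $\Delta\subseteq S\times\Sigma\times S$. A morphism $(S,i,\Delta)\to(S',i',\Delta')$ is a function $f:S\to S'$ with $f(i)=i'$ and $(f(s),a,f(s'))\in\Delta'$ whenever $(s,a,s')\in\Delta$; these form the category $\mathbf{TS}_{\Sigma}$. For a word $w=a_1\cdots a_n\in\Sigma^*$, the finite linear system $L(w)$ has states $0,\dots,n$, initial state $0$ and transitions $(j-1,a_j,j)$; $\mathbf{Lin}_{\Sigma}$ is the full subcategory of $\mathbf{TS}_{\Sigma}$ on the $L(w)$, $w\in\Sigma^*$. A transition system with observations is a tuple $(S,i,\Delta,\omega)$ with $(S,i,\Delta)$ a transition system and $\omega:S\to\mathcal{O}$. An $\epsilon$-bounded morphism $(S,i,\Delta,\omega)\to(S',i',\Delta',\omega')$ is a morphism $f$ of the underlying transition systems with $d(\omega(s),\omega'(f(s)))\le\epsilon$ for all $s\in S$; a bounded morphism is an $\epsilon$-bounded one for some $\epsilon\ge0$. These form the category $\mathbf{TS}_{\Sigma}\mathcal{O}$, with forgetful functor $W:\mathbf{TS}_{\Sigma}\mathcal{O}\to\mathbf{TS}_{\Sigma}$.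 $\mathbf{Lin}_{\Sigma}\mathcal{O}$ is the full subcategory of $\mathbf{TS}_{\Sigma}\mathcal{O}$ of systems whose underlying transition system is finite linear. Given a category $\mathcal{M}$ and a subcategory $\mathcal{P}$, a morphism $f:X\to Y$ of $\mathcal{M}$ is $\mathcal{P}$-open if for every morphism $e:P\to P'$ in $\mathcal{P}$ and all morphisms $p:P\to X$, $q':P'\to Y$ of $\mathcal{M}$ with $f\circ p=q'\circ e$, there is a morphism $q:P'\to X$ of $\mathcal{M}$ with $q\circ e=p$ and $f\circ q=q'$. *)

From Stdlib Require Import Reals List.
Open Scope R_scope.


Definition is_pseudometric {O : Type} (d : O -> O -> R) : Prop :=
  (forall x y, 0 <= d x y) /\ (forall x, d x x = 0) /\
  (forall x y, d x y = d y x) /\ (forall x y z, d x z <= d x y + d y z).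

Record TS (Sigma : Type) := mkTS {
  st : Type;
  init : st;
  trans : st -> Sigma -> st -> Prop }.
Arguments st {Sigma}.
Arguments init {Sigma}.
Arguments trans {Sigma}.

Definition is_morph {Sigma : Type} (T T' : TS Sigma) (f : st T -> st T') : Prop :=
  f (init T) = init T' /\
  forall s a s', trans T s a s' -> trans T' (f s) a (f s').

(* Finite linear system L(w): states 0..n, initial 0, transitions (j-1, a_j, j). *)
Definition Lin {Sigma : Type} (w : list Sigma) : TS Sigma :=
  {| st := {j : nat | (j <= length w)%nat};
     init := exist (fun j => (j <= length w)%nat) 0%nat (le_0_n _);
     trans := fun s a s' =>
       proj1_sig s' = S (proj1_sig s) /\ nth_error w (proj1_sig s) = Some a |}.

Definition TS_lin_open {Sigma : Type} (X Y : TS Sigma) (f : st X -> st Y) : Prop :=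
  forall (w w' : list Sigma) (e : st (Lin w) -> st (Lin w'))
         (p : st (Lin w) -> st X) (q' : st (Lin w') -> st Y),
    is_morph (Lin w) (Lin w') e -> is_morph (Lin w) X p -> is_morph (Lin w') Y q' ->
    (forall x, f (p x) = q' (e x)) ->
    exists q : st (Lin w') -> st X,
      is_morph (Lin w') X q /\ (forall x, q (e x) = p x) /\ (forall y, f (q y) = q' y).

Record TSO (Sigma O : Type) := mkTSO {
  ts : TS Sigma;
  obs : st ts -> O }.
Arguments ts {Sigma O}.
Arguments obs {Sigma O}.

Definition eps_bounded {Sigma O : Type} (d : O -> O -> R) (eps : R)
  (T T' : TSO Sigma O) (f : st (ts T) -> st (ts T')) : Prop :=
  is_morph (ts T) (ts T') f /\ forall s, d (obs T s) (obs T' (f s)) <= eps.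

Definition bounded_morph {Sigma O : Type} (d : O -> O -> R)
  (T T' : TSO Sigma O) (f : st (ts T) -> st (ts T')) : Prop :=
  exists eps, 0 <= eps /\ eps_bounded d eps T T' f.

Definition LinO {Sigma : Type} (O : Type) {w : list Sigma} (om : st (Lin w) -> O) : TSO Sigma O :=
  {| ts := Lin w; obs := om |}.

Definition TSO_lin_open {Sigma O : Type} (d : O -> O -> R) (X Y : TSO Sigma O)
  (f : st (ts X) -> st (ts Y)) : Prop :=
  forall (w w' : list Sigma) (om : st (Lin w) -> O) (om' : st (Lin w') -> O)
         (e : st (Lin w) -> st (Lin w'))
         (p : st (Lin w) -> st (ts X)) (q' : st (Lin w') -> st (ts Y)),
    bounded_morph d (LinO O om) (LinO O om') e -> bounded_morph d (LinO O om) X p ->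
    bounded_morph d (LinO O om') Y q' ->
    (forall x, f (p x) = q' (e x)) ->
    exists q : st (Lin w') -> st (ts X),
      bounded_morph d (LinO O om') X q /\ (forall x, q (e x) = p x) /\ (forall y, f (q y) = q' y).

(* Conversely, a commuting square of plain morphisms becomes a square of bounded
   morphisms once the linear systems are given the observations of T' pulled
   back along q' (and q' o e). *)

From Stdlib Require Import Reals List Lra.

Section BoundedMorphisms.

Context {Sigma O : Type} (d : O -> O -> R).
Hypothesis d_pseudometric : is_pseudometric d.

Definition obs_along (X : TS Sigma) (T : TSO Sigma O) (g : st X -> st (ts T)) :
  TSO Sigma O :=
  mkTSO Sigma O X (fun x => obs T (g x)).

Lemma bounded_morph_is_morph (T T' : TSO Sigma O) (f : st (ts T) -> st (ts T')) :
  bounded_morph d T T' f -> is_morph (ts T) (ts T') f.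
Proof. intros [eps [_ [Hf _]]]; exact Hf. Qed.

Lemma bounded_morph_obs_along (X : TS Sigma) (T : TSO Sigma O) (g : st X -> st (ts T)) :
  is_morph X (ts T) g -> bounded_morph d (obs_along X T g) T g.
Proof.
  destruct d_pseudometric as [_ [d_refl _]].
  intros Hg; exists 0; split; [lra | split; [exact Hg |]].
  intros x; simpl; rewrite d_refl; lra.
Qed.

Lemma bounded_morph_obs_along_factor (X : TS Sigma) (T T' : TSO Sigma O)
  (f : st (ts T) -> st (ts T')) (p : st X -> st (ts T)) (g : st X -> st (ts T')) :
  bounded_morph d T T' f -> is_morph X (ts T) p -> (forall x, f (p x) = g x) ->
  bounded_morph d (obs_along X T' g) T p.
Proof.
  destruct d_pseudometric as [_ [_ [d_sym _]]].
  intros [eps [Heps [_ Hf]]] Hp Hfp.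
  exists eps; split; [exact Heps | split; [exact Hp |]].
  intros x; simpl; rewrite <- Hfp, d_sym; apply Hf.
Qed.

Lemma bounded_morph_factor (X T T' : TSO Sigma O) (f : st (ts T) -> st (ts T'))
  (g : st (ts X) -> st (ts T')) (q : st (ts X) -> st (ts T)) :
  bounded_morph d T T' f -> bounded_morph d X T' g -> is_morph (ts X) (ts T) q ->
  (forall y, f (q y) = g y) -> bounded_morph d X T q.
Proof.
  destruct d_pseudometric as [_ [_ [d_sym d_tri]]].
  intros [epsf [Hepsf [_ Hf]]] [epsg [Hepsg [_ Hg]]] Hq Hfq.
  exists (epsg + epsf); split; [lra | split; [exact Hq |]].
  intros y; apply Rle_trans with (1 := d_tri _ (obs T' (g y)) _).
  apply Rplus_le_compat; [apply Hg |].
  rewrite d_sym, <- Hfq; apply Hf.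
Qed.

End BoundedMorphisms.

Theorem proposition2 (Sigma O : Type) (d : O -> O -> R) (Hd : is_pseudometric d)
  (T T' : TSO Sigma O) (f : st (ts T) -> st (ts T')) :
  bounded_morph d T T' f ->
  (TSO_lin_open d T T' f <-> TS_lin_open (ts T) (ts T') f).
Proof.
  intros Hf; split.
  - intros Hopen w w' e p q' He Hp Hq' Hcomm.
    destruct (Hopen w w' (fun x => obs T' (q' (e x))) (fun y => obs T' (q' y)) e p q')
      as [q [Hq Hlift]]; [| | | exact Hcomm |].
    + exact (bounded_morph_obs_along d Hd (Lin w) (LinO O _) e He).
    + exact (bounded_morph_obs_along_factor d Hd (Lin w) T T' f p _ Hf Hp Hcomm).
    + exact (bounded_morph_obs_along d Hd (Lin w') T' q' Hq').
    + exists q; split; [exact (bounded_morph_is_morph d _ _ _ Hq) | exact Hlift].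
  - intros Hopen w w' om om' e p q' He Hp Hq' Hcomm.
    destruct (Hopen w w' e p q'
                (bounded_morph_is_morph d _ _ _ He) (bounded_morph_is_morph d _ _ _ Hp)
                (bounded_morph_is_morph d _ _ _ Hq') Hcomm) as [q [Hq [Hqe Hfq]]].
    exists q; split; [| split; assumption].
    exact (bounded_morph_factor d Hd (LinO O om') T T' f q' q Hf Hq' Hq Hfq).
Qed.
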